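(* Let $k=2m+1$, $l=2n+1$ be odd integers and let $U(k,l)\subset\mathbb C^3(u,v,z)$ be the vanishing set of $S_n(t)S_{m-1}(z)-S_{n-1}(t)S_m(z)$ where $t=uv-z\big(S_m^2(z)+S_{m-1}^2(z)\big)+4S_m(z)S_{m-1}(z)$. Then on $U(k,l)$, $v=0$ only for a set of dimension zero.
   Context: The Chebyshev polynomials $S_j(\omega)$ are defined for all integers $j$ by $S_0=1$, $S_1=\omega$, $S_{j+1}=\omega S_j-S_{j-1}$.
   Formalization: Only finitely many z occur among the points (u,0,z) of U(k,l), rather than {v=0} ∩ U(k,l) having dimension zero, and (k,l) differs from (1,1) and (−1,−1). The statement above fails without it. *)

From mathcomp Require Import all_boot all_order all_algebra.
Set Implicit Arguments. Unset Strict Implicit. Unset Printing Implicit Defensive.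
Import Order.TTheory GRing.Theory Num.Theory.
Local Open Scope ring_scope.

Fixpoint chebS_nat (R : nzRingType) (j : nat) : {poly R} :=
  match j with
  | 0%N => 1
  | 1%N => 'X
  | (j'.+1 as j1).+1 => 'X * chebS_nat R j1 - chebS_nat R j'
  end.

(* Extension to all integers j compatible with S_{j+1} = X S_j - S_{j-1}:
   S_{-1} = 0 and S_{-j-2} = - S_j for j >= 0. *)
Definition chebS (R : nzRingType) (j : int) : {poly R} :=
  match j with
  | Posz n => chebS_nat R n
  | Negz 0 => 0
  | Negz n.+1 => - chebS_nat R n
  end.

Definition S (R : nzRingType) (j : int) (w : R) : R := (chebS R j).[w].

Definition tUV (R : nzRingType) (m : int) (u v z : R) : R :=
  u * v - z * (S m z ^+ 2 + S (m - 1) z ^+ 2) + 4 * S m z * S (m - 1) z.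

Definition Ukl_poly (R : nzRingType) (m n : int) (u v z : R) : R :=
  let t := tUV m u v z in
  S n t * S (m - 1) z - S (n - 1) t * S m z.

Definition inU (R : nzRingType) (m n : int) (u v z : R) : Prop :=
  Ukl_poly m n u v z = 0.

(* On the plane v = 0 the coordinate t becomes a polynomial T(z) in z alone, so
   U(k,l) meets {v = 0} in the zero set of the one-variable polynomial
   S_n(T) S_{m-1} - S_{n-1}(T) S_m, and it suffices to show that it is nonzero.
   Since S_{-j-1} = -S_{j-1}, a negative index only changes signs and swaps the
   pair (S_m, S_{m-1}), which leaves T unchanged; so only m = j, n = i >= 0 and
   two difference polynomials need to be considered.  For them deg T = 2j+1, and
   the two products have different degrees unless one of them is zero; both are
   zero only in the excluded cases (m, n) = (0, 0) and (-1, -1). *)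

From mathcomp Require Import all_boot all_order all_algebra zify.
Set Implicit Arguments. Unset Strict Implicit. Unset Printing Implicit Defensive.
Import GRing.Theory.
Local Open Scope ring_scope.

Section ChebyshevShifts.
Variable F : comNzRingType.
Local Notation A := (chebS_nat F).

Definition chebS_prev (k : nat) : {poly F} := if k is p.+1 then A p else 0.

Lemma chebS_Posz j : chebS F (Posz j) = A j.
Proof. by []. Qed.

Lemma chebS_Posz_sub1 j : chebS F (Posz j - 1) = chebS_prev j.
Proof. by case: j => // j; have -> : Posz j.+1 - 1 = Posz j by lia. Qed.

Lemma chebS_Negz j : chebS F (Negz j) = - chebS_prev j.
Proof. by case: j => [|j] /=; rewrite ?oppr0. Qed.

Lemma chebS_Negz_sub1 j : chebS F (Negz j - 1) = - A j.
Proof. by have -> : Negz j - 1 = Negz j.+1 by rewrite !NegzE; lia. Qed.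

(* t at v = 0, with a = S_m and b = S_{m-1} *)
Definition tpoly (a b : {poly F}) : {poly F} :=
  (4 : F) *: (a * b) - 'X * (a ^+ 2 + b ^+ 2).

Lemma tpoly_oppC a b : tpoly (- b) (- a) = tpoly a b.
Proof. by rewrite /tpoly mulrNN !sqrrN (mulrC b) (addrC (b ^+ 2)). Qed.

Definition Ukl_poly_v0 (m n : int) : {poly F} :=
  let T := tpoly (chebS F m) (chebS F (m - 1)) in
  (chebS F n \Po T) * chebS F (m - 1) - (chebS F (n - 1) \Po T) * chebS F m.

Lemma horner_Ukl_poly_v0 m n u z : (Ukl_poly_v0 m n).[z] = Ukl_poly m n u 0 z.
Proof.
rewrite /Ukl_poly_v0 /Ukl_poly /tUV /S /tpoly !hornerE !horner_comp !hornerE.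
by rewrite (addrC (4 * _ * _)).
Qed.

End ChebyshevShifts.

Lemma subr_neq0_size (R : nzRingType) (p q : {poly R}) :
  (size q < size p)%N -> p - q != 0.
Proof. by move=> ltqp; rewrite subr_eq0; apply: contraTneq ltqp => ->; rewrite ltnn. Qed.

Section ChebyshevSizes.
Variable F : idomainType.
Local Notation A := (chebS_nat F).
Local Notation P := (chebS_prev F).
Local Notation T j := (tpoly (A j) (P j)).

Lemma size_chebS_nat k : size (A k) = k.+1.
Proof.
suff : size (A k) = k.+1 /\ size (A k.+1) = k.+2 by case.
elim: k => [|k [IHk IHk1]]; first by rewrite /= size_poly1 size_polyX.
have sizeXA : size ('X * A k.+1) = k.+3.
  by rewrite mulrC size_mulX ?IHk1 // -size_poly_eq0 IHk1.
by split=> //; rewrite [A k.+2]/= size_polyDl sizeXA // size_polyN IHk.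
Qed.

Lemma chebS_nat_neq0 k : A k != 0.
Proof. by rewrite -size_poly_eq0 size_chebS_nat. Qed.

Lemma size_chebS_prev k : size (P k) = k.
Proof. by case: k => [|k]; rewrite ?size_poly0 ?size_chebS_nat. Qed.

Lemma size_tpoly_nat j : size (T j) = (j.*2).+2.
Proof.
have sizeA2 : size (A j ^+ 2) = (j.*2).+1.
  by rewrite expr2 size_mul ?chebS_nat_neq0 // size_chebS_nat -mul2n; lia.
have sizeP2 : (size (P j ^+ 2) < (j.*2).+1)%N.
  case: j {sizeA2} => [|j]; first by rewrite expr0n size_poly0.
  by rewrite expr2 size_mul ?chebS_nat_neq0 // size_chebS_nat -!mul2n; lia.
have sizeSq : size (A j ^+ 2 + P j ^+ 2) = (j.*2).+1 by rewrite size_polyDl sizeA2.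
have sizeXSq : size ('X * (A j ^+ 2 + P j ^+ 2)) = (j.*2).+2.
  by rewrite mulrC size_mulX ?sizeSq // -size_poly_eq0 sizeSq.
rewrite /tpoly addrC size_polyDl size_polyN sizeXSq //.
apply: leq_ltn_trans (size_scale_leq _ _) _.
apply: leq_ltn_trans (size_polyMleq _ _) _.
by rewrite size_chebS_nat size_chebS_prev -mul2n; lia.
Qed.

Lemma comp_tpoly_eq0 p j : (p \Po T j == 0) = (p == 0).
Proof. by rewrite comp_poly_eq0 // size_tpoly_nat. Qed.

Lemma size_comp_tpoly_mul k j l :
  size ((A k \Po T j) * A l) = (k * (j.*2).+1 + l).+1.
Proof.
rewrite size_mul ?comp_tpoly_eq0 ?chebS_nat_neq0 // size_chebS_nat.
rewrite -[size _]prednK ?lt0n ?size_poly_eq0 ?comp_tpoly_eq0 ?chebS_nat_neq0 //.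
by rewrite size_comp_poly size_tpoly_nat size_chebS_nat addnS.
Qed.

Lemma comp_tpoly_diag_neq0 i j : (A i \Po T j) * A j - (P i \Po T j) * P j != 0.
Proof.
apply: subr_neq0_size; rewrite size_comp_tpoly_mul.
apply: leq_ltn_trans (size_polyMleq _ _) _.
have := size_comp_poly_leq (P i) (T j).
rewrite size_tpoly_nat !size_chebS_prev /=.
have := leq_mul (leq_pred i) (leqnn (j.*2).+1).
move: (size _) => s; lia.
Qed.

Lemma comp_tpoly_cross_neq0 i j :
  ~ (i = 0%N /\ j = 0%N) -> (A i \Po T j) * P j - (P i \Po T j) * A j != 0.
Proof.
case: j => [|j] ij_neq0.
  case: i ij_neq0 => [[//]|i _].
  by rewrite mulr0 sub0r mulr1 oppr_eq0 comp_tpoly_eq0 chebS_nat_neq0.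
case: i {ij_neq0} => [|i].
  by rewrite comp_poly0 mul0r subr0 comp_polyC mul1r chebS_nat_neq0.
apply: subr_neq0_size; rewrite !size_comp_tpoly_mul -!mul2n; nia.
Qed.

End ChebyshevSizes.

Lemma Ukl_poly_v0_neq0 (F : idomainType) (m n : int) :
  ~ ((m = 0 /\ n = 0) \/ (m = -1 /\ n = -1)) -> Ukl_poly_v0 F m n != 0.
Proof.
rewrite /Ukl_poly_v0; case: m => j; case: n => i nondeg;
  rewrite ?chebS_Posz_sub1 ?chebS_Negz_sub1 ?chebS_Posz ?chebS_Negz ?tpoly_oppC
          ?raddfN ?mulNr ?mulrN ?opprK.
- by apply: comp_tpoly_cross_neq0 => -[i0 j0]; apply: nondeg; left; rewrite i0 j0.
- by rewrite addrC comp_tpoly_diag_neq0.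
- by rewrite addrC -opprB oppr_eq0 comp_tpoly_diag_neq0.
- rewrite -opprB oppr_eq0.
  by apply: comp_tpoly_cross_neq0 => -[i0 j0]; apply: nondeg; right; rewrite i0 j0.
Qed.

Lemma closed_poly_roots_finite (F : closedFieldType) (p : {poly F}) :
  p != 0 -> exists s : seq F, forall x, root p x -> x \in s.
Proof.
move=> p_neq0; have [s def_p] := closed_field_poly_normal p.
by exists s => x; rewrite def_p rootZ ?root_prod_XsubC ?lead_coef_eq0.
Qed.

Theorem lemma4p6 (C : numClosedFieldType) (m n : int)
  (hnondeg : ~ ((m = 0 /\ n = 0) \/ (m = -1 /\ n = -1))) :
  exists s : seq C, forall u z : C, inU m n u 0 z -> z \in s.
Proof.
have [s roots_in_s] := closed_poly_roots_finite (Ukl_poly_v0_neq0 C hnondeg).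
by exists s => u z; rewrite /inU -(horner_Ukl_poly_v0 _ _ u) => /eqP /roots_in_s.
Qed.
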